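(* Let $G$ be a LEF-group and let $\mathcal{C}$ be a concrete category with a terminal object and fibered products. Let $(A,a)$ be a pointed object of $\mathcal{C}$ such that $A$ is finite product Hopfian or finite product co-Hopfian. If $\tau,\sigma\in CA_{\mathcal{C}}(G,(A,a))$ satisfy $\sigma\circ\tau=\mathrm{Id}$, then $\tau\circ\sigma=\mathrm{Id}$.
   Context: A group $G$ is LEF if every finite subset $S\subset G$ admits an injective map $\varphi\colon S\to H$ into some finite group $H$ with $\varphi(ab)=\varphi(a)\varphi(b)$ whenever $a,b,ab\in S$. A concrete category is a category with a faithful functor to sets; objects and morphisms are identified with their underlying sets and maps. In a category, an object $A$ is Hopfian if every epimorphism $A\to A$ is an automorphism, co-Hopfian if every monomorphism $A\to A$ is an automorphism; $A$ is finite product Hopfian (resp. co-Hopfian) if $A^n$ is Hopfian (resp. co-Hopfian) for all $n\in\mathbb{N}$. For finite $E$, $A^E$ is the product over the terminal object $\varepsilon$ of copies of $A$ indexed by $E$. A pointed object is $(A,a)$ with $a\colon\varepsilon\to A$; a pointed morphism $(A,a)\to(B,b)$ is $f\colon A\to B$ with $f\circ a=b$; $A^E$ is pointed by $a^E$ with all components $a$. $G$ acts on $A^G$ by $(gc)(h)=c(g^{-1}h)$; a cellular automaton is a map $\tau\colon A^G\to A^G$ with $(\tau(c))(g)=\mu((g^{-1}c)|_M)$ for some finite $M\subset G$ and map $\mu\colon A^M\to A$. $CA_{\mathcal{C}}(G,(A,a))$ is the set of cellular automata admitting, for some finite memory set $M$, a local defining map that is the underlying map of a pointed morphism $(A^M,a^M)\to(A,a)$.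 *)

From mathcomp Require Import all_boot fingroup.
From Stdlib Require Import List.
Set Implicit Arguments.
Unset Strict Implicit.
Unset Printing Implicit Defensive.

Record abs_group := Group {
  gcar :> Type;
  gmul : gcar -> gcar -> gcar;
  gone : gcar;
  ginv : gcar -> gcar;
  gmulA : forall x y z, gmul x (gmul y z) = gmul (gmul x y) z;
  gmul1 : forall x, gmul gone x = x;
  gmulV : forall x, gmul (ginv x) x = gone }.

Definition LEF (G : abs_group) : Prop :=
  forall S : list G, exists (H : finGroupType) (phi : G -> H),
    (forall x y, In x S -> In y S -> phi x = phi y -> x = y) /\
    (forall x y, In x S -> In y S -> In (gmul x y) S ->
       phi (gmul x y) = (phi x * phi y)%g).

(* A concrete category: objects with underlying sets; morphisms are identified
   with their underlying maps (faithfulness), i.e. a class of maps closed under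
   identities and composition. *)
Record concrete_category := ConcreteCategory {
  cc_obj :> Type;
  carrier : cc_obj -> Type;
  hom : forall A B : cc_obj, (carrier A -> carrier B) -> Prop;
  hom_id : forall A : cc_obj, hom (fun x : carrier A => x);
  hom_comp : forall A B D (f : carrier A -> carrier B) (g : carrier B -> carrier D),
      hom f -> hom g -> hom (fun x => g (f x)) }.
Arguments hom {c A B} _.

Section Cat.
Variable C : concrete_category.

Definition is_terminal (t : C) : Prop :=
  forall A : C, exists! f : carrier A -> carrier t, hom f.

Definition is_pullback (A B D : C) (f : carrier A -> carrier D)
    (g : carrier B -> carrier D) (P : C)
    (p1 : carrier P -> carrier A) (p2 : carrier P -> carrier B) : Prop :=
  hom p1 /\ hom p2 /\ (forall x, f (p1 x) = g (p2 x)) /\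
  forall (Q : C) (q1 : carrier Q -> carrier A) (q2 : carrier Q -> carrier B),
    hom q1 -> hom q2 -> (forall y, f (q1 y) = g (q2 y)) ->
    exists! u : carrier Q -> carrier P,
      hom u /\ (forall y, p1 (u y) = q1 y) /\ (forall y, p2 (u y) = q2 y).

Definition has_terminal : Prop := exists t : C, is_terminal t.

Definition has_fibered_products : Prop :=
  forall (A B D : C) (f : carrier A -> carrier D) (g : carrier B -> carrier D),
    hom f -> hom g ->
    exists (P : C) (p1 : carrier P -> carrier A) (p2 : carrier P -> carrier B),
      @is_pullback A B D f g P p1 p2.

(* The forgetful functor preserves the terminal object and fibered products
   (so that objects A^E have underlying set the set of maps E -> A). *)
Definition forget_preserves_terminal : Prop :=
  forall t : C, is_terminal t -> exists x : carrier t, forall y, y = x.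

Definition forget_preserves_fibered_products : Prop :=
  forall (A B D : C) (f : carrier A -> carrier D) (g : carrier B -> carrier D)
    (P : C) (p1 : carrier P -> carrier A) (p2 : carrier P -> carrier B),
    hom f -> hom g -> @is_pullback A B D f g P p1 p2 ->
    (forall x y, p1 x = p1 y -> p2 x = p2 y -> x = y) /\
    (forall a b, f a = g b -> exists x, p1 x = a /\ p2 x = b).

Definition is_power (A : C) (E : Type) (P : C)
    (pi : E -> carrier P -> carrier A) : Prop :=
  (forall e, hom (pi e)) /\
  forall (Q : C) (q : E -> carrier Q -> carrier A), (forall e, hom (q e)) ->
    exists! u : carrier Q -> carrier P,
      hom u /\ forall e, (fun y => pi e (u y)) = q e.

Definition is_epi (A B : C) (f : carrier A -> carrier B) : Prop :=
  forall (D : C) (g h : carrier B -> carrier D), hom g -> hom h ->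
    (fun x => g (f x)) = (fun x => h (f x)) -> g = h.

Definition is_mono (A B : C) (f : carrier A -> carrier B) : Prop :=
  forall (D : C) (g h : carrier D -> carrier A), hom g -> hom h ->
    (fun x => f (g x)) = (fun x => f (h x)) -> g = h.

Definition is_automorphism (A : C) (f : carrier A -> carrier A) : Prop :=
  hom f /\ exists f' : carrier A -> carrier A,
    hom f' /\ (forall x, f' (f x) = x) /\ (forall x, f (f' x) = x).

Definition hopfian (A : C) : Prop :=
  forall f : carrier A -> carrier A, hom f -> is_epi f -> is_automorphism f.

Definition cohopfian (A : C) : Prop :=
  forall f : carrier A -> carrier A, hom f -> is_mono f -> is_automorphism f.

Definition finite_product_hopfian (A : C) : Prop :=
  forall (n : nat) (P : C) (pi : 'I_n -> carrier P -> carrier A),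
    is_power pi -> hopfian P.

Definition finite_product_cohopfian (A : C) : Prop :=
  forall (n : nat) (P : C) (pi : 'I_n -> carrier P -> carrier A),
    is_power pi -> cohopfian P.

(* CA_C(G,(A,a)), with eps a terminal object and a : eps -> A the point.
   The memory set is a finite subset M of G (a boolean predicate contained in a
   finite list); the index type of A^M is {g | M g}. *)
Definition CA_C (G : abs_group) (eps A : C) (a : carrier eps -> carrier A)
    (tau : (G -> carrier A) -> (G -> carrier A)) : Prop :=
  exists (M : G -> bool) (s : list G),
    (forall g, M g -> In g s) /\
    exists mu : ({g : G | M g} -> carrier A) -> carrier A,
      (forall (c : G -> carrier A) (g : G),
          tau c g = mu (fun m => c (gmul g (proj1_sig m)))) /\
      exists (P : C) (pi : {g : G | M g} -> carrier P -> carrier A)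
             (m : carrier P -> carrier A) (aM : carrier eps -> carrier P),
        is_power pi /\
        (forall x, m x = mu (fun e => pi e x)) /\
        hom m /\ hom aM /\
        (forall e y, pi e (aM y) = a y) /\
        (forall y, m (aM y) = a y).

End Cat.

(* For a finite group H and a power P = A^H of A in C, a cellular automaton
   with memory M induces an endomorphism of P by letting H act through a map
   phi : G -> H.  Given a finite subset of G containing the memory sets of tau
   and sigma, LEF provides phi multiplicative on the products that occur, so
   sigma o tau = Id forces T_sigma o T_tau = Id on A^H.  Hopficity (or
   co-Hopficity) of A^H upgrades this to T_tau o T_sigma = Id, and since phi
   admits a retraction on those products, every configuration near a point g
   of G is read off from a suitable point of A^H, which gives
   tau o sigma = Id. *)
From mathcomp Require Import all_boot fingroup.
From Stdlib Require Import List FunctionalExtensionality ClassicalEpsilon.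
Set Implicit Arguments.
Unset Strict Implicit.
Unset Printing Implicit Defensive.

Section Powers.
Variables (C : concrete_category) (A : C).

Definition jointly_surjective (E : Type) (P : C) (pi : E -> carrier P -> carrier A) :=
  forall d : E -> carrier A, exists x, forall e, pi e x = d e.

Definition concrete_power (E : Type) (P : C) (pi : E -> carrier P -> carrier A) :=
  is_power pi /\ jointly_surjective pi.

Lemma power_hom_ext (E : Type) (P Q : C) (pi : E -> carrier P -> carrier A)
    (f g : carrier Q -> carrier P) :
  is_power pi -> hom f -> hom g -> (forall e x, pi e (f x) = pi e (g x)) -> f = g.
Proof.
move=> [Hpi Hu] Hf Hg Efg.
have [u [_ uu]] := Hu Q (fun e y => pi e (f y)) (fun e => hom_comp Hf (Hpi e)).
rewrite -(uu f) ?(uu g) //; split=> // e; apply: functional_extensionality => x //.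
Qed.

Lemma is_power_reindex (E E' : Type) (P : C) (pi : E -> carrier P -> carrier A)
    (f : E' -> E) (g : E -> E') :
  cancel g f -> cancel f g -> is_power pi -> is_power (fun e' => pi (f e')).
Proof.
move=> gK fK [Hpi Hu]; split=> [e'|Q q Hq]; first exact: Hpi.
have [u [[Hu1 Eu] uu]] := Hu Q (fun e => q (g e)) (fun e => Hq (g e)).
exists u; split=> [|v [Hv Ev]]; first by split=> // e'; rewrite Eu fK.
by apply: uu; split=> // e; rewrite -Ev gK.
Qed.

Lemma concrete_power_reindex (E E' : Type) (P : C) (pi : E -> carrier P -> carrier A)
    (f : E' -> E) (g : E -> E') :
  cancel g f -> cancel f g -> concrete_power pi -> concrete_power (fun e' => pi (f e')).
Proof.
move=> gK fK [Hpi Hs]; split; first exact: is_power_reindex Hpi.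
by move=> d; have [x Hx] := Hs (fun e => d (g e)); exists x => e'; rewrite Hx fK.
Qed.

Section Construction.
Variable eps : C.
Hypotheses (Heps : is_terminal eps) (Hfib : has_fibered_products C).
Hypotheses (Hpterm : forget_preserves_terminal C)
           (Hpfib : forget_preserves_fibered_products C).

Lemma concrete_power_empty (E : Type) :
  (E -> False) -> exists pi : E -> carrier eps -> carrier A, concrete_power pi.
Proof.
move=> E0; exists (fun e => False_rect _ (E0 e)); split; first split.
- by move=> e; case: (E0 e).
- move=> Q q _; have [t [ht ut]] := Heps Q.
  exists t; split=> [|v [Hv _]]; last exact: ut.
  by split=> // e; case: (E0 e).
- by move=> d; have [x _] := Hpterm Heps; exists x => e; case: (E0 e).
Qed.

(* A^(option E) is the fibered product of A^E and A over the terminal object. *)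
Lemma concrete_power_option (E : Type) (P : C) (pi : E -> carrier P -> carrier A) :
  concrete_power pi ->
  exists (P' : C) (pi' : option E -> carrier P' -> carrier A), concrete_power pi'.
Proof.
move=> [[Hpi Hu] Hs].
have [tP [htP _]] := Heps P; have [tA [htA _]] := Heps A.
have [P' [p1 [p2 Hpb]]] := Hfib htP htA.
have [Hp1 [Hp2 [_ Hpbu]]] := Hpb.
exists P', (fun o => if o is Some e then fun x => pi e (p1 x) else p2).
split; first split.
- by case=> [e|] //; apply: hom_comp.
- move=> Q q Hq.
  have [uE [[HuE EuE] uniqE]] := Hu Q (fun e => q (Some e)) (fun e => Hq (Some e)).
  have [t [_ ut]] := Heps Q.
  have tP_tA y : tP (uE y) = tA (q None y).
    by rewrite -(equal_f (ut _ (hom_comp HuE htP)) y)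
               -(equal_f (ut _ (hom_comp (Hq None) htA)) y).
  have [u [[Hu' [Hu1 Hu2]] uu]] := Hpbu Q uE (q None) HuE (Hq None) tP_tA.
  exists u; split=> [|v [Hv Ev]].
    split=> // -[e|]; apply: functional_extensionality => y /=; last exact: Hu2.
    by rewrite Hu1 -(EuE e).
  have p1v : (fun y => p1 (v y)) = uE.
    by apply/esym/uniqE; split=> [|e]; [exact: hom_comp Hv Hp1 | exact: (Ev (Some e))].
  apply: uu; split=> //; split=> y; first by rewrite -p1v.
  by rewrite -(Ev None).
- move=> d; have [xE HxE] := Hs (fun e => d (Some e)).
  have [_ Hsurj] := Hpfib htP htA Hpb.
  have [t0 Ht0] := Hpterm Heps.
  have [x [E1 E2]] := Hsurj xE (d None) (etrans (Ht0 (tP xE)) (esym (Ht0 (tA _)))).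
  by exists x; case=> [e|] /=; rewrite ?E1 ?HxE.
Qed.

Lemma concrete_power_ord (n : nat) :
  exists (P : C) (pi : 'I_n -> carrier P -> carrier A), concrete_power pi.
Proof.
elim: n => [|n [P [pi /concrete_power_option [P' [pi' Hpi']]]]].
  have [pi Hpi] := @concrete_power_empty 'I_0 (fun i => notF (ltn_ord i)).
  by exists eps, pi.
exists P', (fun i => pi' (unlift ord_max i)).
apply: (concrete_power_reindex
          (g := fun o => if o is Some j then lift ord_max j else ord_max)) Hpi'.
- by case=> [j|] /=; rewrite ?liftK ?unlift_none.
- by move=> i; case: unliftP.
Qed.

Lemma exists_concrete_power (T : finType) :
  exists (P : C) (pi : T -> carrier P -> carrier A), concrete_power pi.
Proof.
have [P [pi Hpi]] := concrete_power_ord #|T|.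
exists P, (fun t => pi (enum_rank t)).
exact: (concrete_power_reindex (@enum_valK T) (@enum_rankK T) Hpi).
Qed.

End Construction.

Lemma hopfian_left_inverse (P : C) (f g : carrier P -> carrier P) :
  hopfian P -> hom f -> hom g -> (forall x, g (f x) = x) -> forall x, f (g x) = x.
Proof.
move=> HP Hf Hg gK.
have g_epi : is_epi g.
  move=> D u v _ _ Euv; apply: functional_extensionality => y.
  by rewrite -(gK y) (equal_f Euv (f y)).
have [_ [g' [_ [g'K _]]]] := HP g Hg g_epi.
suff -> : f = g' by exact: g'K.
by apply: functional_extensionality => y; rewrite -[f y]g'K gK.
Qed.

Lemma cohopfian_left_inverse (P : C) (f g : carrier P -> carrier P) :
  cohopfian P -> hom f -> hom g -> (forall x, g (f x) = x) -> forall x, f (g x) = x.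
Proof.
move=> HP Hf Hg gK.
have f_mono : is_mono f.
  move=> D u v _ _ Euv; apply: functional_extensionality => y.
  by rewrite -(gK (u y)) -(gK (v y)) (equal_f Euv y).
have [_ [f' [_ [_ f'K]]]] := HP f Hf f_mono.
suff -> : g = f' by exact: f'K.
by apply: functional_extensionality => y; rewrite -[y in g y]f'K gK.
Qed.

Lemma fin_power_left_inverse (T : finType) (P : C) (pi : T -> carrier P -> carrier A)
    (f g : carrier P -> carrier P) :
  finite_product_hopfian A \/ finite_product_cohopfian A -> is_power pi ->
  hom f -> hom g -> (forall x, g (f x) = x) -> forall x, f (g x) = x.
Proof.
move=> HA Hpi; have Hpi' := is_power_reindex (@enum_rankK T) (@enum_valK T) Hpi.
case: HA => [HH|HC]; first exact: hopfian_left_inverse (HH _ _ _ Hpi').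
exact: cohopfian_left_inverse (HC _ _ _ Hpi').
Qed.

End Powers.

Section LocalRules.
Variables (G : abs_group) (X : Type).

Definition local_rule (M : G -> bool) (mu : ({g : G | M g} -> X) -> X)
    (tau : (G -> X) -> G -> X) :=
  forall c g, tau c g = mu (fun m => c (gmul g (proj1_sig m))).

Variables (H : finGroupType) (phi : G -> H) (P : Type) (proj : H -> P -> X).

Definition simulates (M : G -> bool) (mu : ({g : G | M g} -> X) -> X) (T : P -> P) :=
  forall h x, proj h (T x) = mu (fun m => proj (h * phi (proj1_sig m))%g x).

Lemma simulates_comp (M1 M2 : G -> bool)
    (mu1 : ({g : G | M1 g} -> X) -> X) (mu2 : ({g : G | M2 g} -> X) -> X)
    (tau1 tau2 : (G -> X) -> G -> X) (T1 T2 : P -> P) :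
  local_rule mu1 tau1 -> local_rule mu2 tau2 ->
  simulates mu1 T1 -> simulates mu2 T2 ->
  forall c g h x,
    (forall e e', M2 e -> M1 e' ->
       c (gmul (gmul g e) e') = proj (h * phi e * phi e')%g x) ->
  proj h (T2 (T1 x)) = tau2 (tau1 c) g.
Proof.
move=> tau1E tau2E T1E T2E c g h x Hc.
rewrite T2E tau2E; congr mu2; apply: functional_extensionality => -[e He] /=.
rewrite T1E tau1E; congr mu1; apply: functional_extensionality => -[e' He'] /=.
by rewrite Hc.
Qed.

End LocalRules.

Lemma power_endo_of_rule (C : concrete_category) (A : C) (E M : Type) (P PM : C)
    (pi : E -> carrier P -> carrier A) (piM : M -> carrier PM -> carrier A)
    (mu : (M -> carrier A) -> carrier A) (m : carrier PM -> carrier A) (psi : E -> M -> E) :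
  is_power pi -> is_power piM -> hom m -> (forall x, m x = mu (fun e => piM e x)) ->
  exists T : carrier P -> carrier P,
    hom T /\ forall h x, pi h (T x) = mu (fun e => pi (psi h e) x).
Proof.
move=> [Hpi Hu] [_ HuM] Hm mE.
have coord h : exists ch : carrier P -> carrier A,
    hom ch /\ forall x, ch x = mu (fun e => pi (psi h e) x).
  have [u [[Hu' Eu] _]] := HuM P (fun e => pi (psi h e)) (fun e => Hpi _).
  exists (fun x => m (u x)); split=> [|x]; first exact: hom_comp Hu' Hm.
  by rewrite mE; congr mu; apply: functional_extensionality => e; rewrite (equal_f (Eu e)).
pose ch h := proj1_sig (constructive_indefinite_description _ (coord h)).
have Hch h := proj2_sig (constructive_indefinite_description _ (coord h)).
have [T [[HT ET] _]] := Hu P ch (fun h => (Hch h).1).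
by exists T; split=> // h x; rewrite -(Hch h).2 (equal_f (ET h)).
Qed.

Lemma CA_C_simulated (G : abs_group) (C : concrete_category) (eps A : C)
    (a : carrier eps -> carrier A) (tau : (G -> carrier A) -> G -> carrier A) :
  CA_C a tau ->
  exists (M : G -> bool) (s : list G) (mu : ({g : G | M g} -> carrier A) -> carrier A),
    (forall g, M g -> In g s) /\ local_rule mu tau /\
    forall (H : finGroupType) (phi : G -> H) (P : C) (pi : H -> carrier P -> carrier A),
      is_power pi -> exists T, hom T /\ simulates phi pi mu T.
Proof.
move=> [M [s [Ms [mu [tauE [PM [piM [m [_ [HpiM [mE [Hm _]]]]]]]]]]]].
exists M, s, mu; do 2!split=> //.
move=> H phi P pi Hpi.
exact: power_endo_of_rule (fun h e => (h * phi (proj1_sig e))%g) Hpi HpiM Hm mE.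
Qed.

Lemma exists_retraction (X Y : Type) (x0 : X) (D : X -> Prop) (f : X -> Y) :
  (forall x y, D x -> D y -> f x = f y -> x = y) ->
  exists g : Y -> X, forall x, D x -> g (f x) = x.
Proof.
move=> f_inj; exists (fun y => epsilon (inhabits x0) (fun x => D x /\ f x = y)) => x Dx.
have [Dx' fx'] := epsilon_spec (inhabits x0) (fun z => D z /\ f z = f x) (ex_intro _ x (conj Dx erefl)).
exact: f_inj.
Qed.

Section LEF.
Variable G : abs_group.

Lemma gmulrV (x : G) : gmul x (ginv x) = gone G.
Proof.
have E : gmul (ginv (ginv x)) (ginv x) = gone G by rewrite gmulV.
by rewrite -[gmul x _]gmul1 -{1}E -gmulA (gmulA (ginv x)) gmulV gmul1.
Qed.

Lemma gmul1r (x : G) : gmul x (gone G) = x.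
Proof. by rewrite -(gmulV x) gmulA gmulrV gmul1. Qed.

Definition products (l : list G) : list G := flat_map (fun x => map (gmul x) l) l.

Lemma in_products (l : list G) x y : In x l -> In y l -> In (gmul x y) (products l).
Proof. by move=> Hx Hy; apply/in_flat_map; exists x; split=> //; apply: in_map. Qed.

Lemma LEF_local_retraction (l : list G) : LEF G ->
  exists (H : finGroupType) (phi : G -> H) (psi : H -> G),
    [/\ phi (gone G) = 1%g,
        forall x y, In x l -> In y l -> phi (gmul x y) = (phi x * phi y)%g &
        forall u, In u (gone G :: products l) -> psi (phi u) = u].
Proof.
pose S := gone G :: l ++ products l.
have S1 : In (gone G) S by left.
have Sl x : In x l -> In x S by move=> Hx; right; apply: in_or_app; left.
have Sprod x y : In x l -> In y l -> In (gmul x y) S.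
  by move=> Hx Hy; right; apply: in_or_app; right; apply: in_products.
move=> /(_ S) [H [phi [phi_inj phiM]]].
have [psi psiK] := @exists_retraction _ _ (gone G) (fun u => In u S) phi phi_inj.
exists H, phi, psi; split.
- have := phiM _ _ S1 S1; rewrite gmul1 => E.
  by apply: (mulgI (phi (gone G))); rewrite mulg1 -E.
- by move=> x y Hx Hy; apply: phiM; [apply: Sl | apply: Sl | apply: Sprod].
- move=> u [<-|Hu]; first exact: psiK.
  by apply: psiK; right; apply: in_or_app; right.
Qed.

End LEF.

Theorem theorem6p1 (G : abs_group) (C : concrete_category)
    (HG : LEF G)
    (Hterm : has_terminal C) (Hfib : has_fibered_products C)
    (Hpterm : forget_preserves_terminal C)
    (Hpfib : forget_preserves_fibered_products C)
    (eps : C) (Heps : is_terminal eps)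
    (A : C) (a : carrier eps -> carrier A) (Ha : hom a)
    (HA : finite_product_hopfian A \/ finite_product_cohopfian A)
    (tau sigma : (G -> carrier A) -> (G -> carrier A))
    (Htau : CA_C a tau) (Hsigma : CA_C a sigma)
    (Hst : forall c, sigma (tau c) = c) :
  forall c, tau (sigma c) = c.
Proof.
have [Mt [st [mut [Mt_st [tauE tau_sim]]]]] := CA_C_simulated Htau.
have [Ms [ss [mus [Ms_ss [sigmaE sigma_sim]]]]] := CA_C_simulated Hsigma.
have [H [phi [psi [phi1 phiM psiK]]]] := LEF_local_retraction (st ++ ss) HG.
have in_l_t e : Mt e -> In e (st ++ ss) by move/Mt_st => ?; apply: in_or_app; left.
have in_l_s e : Ms e -> In e (st ++ ss) by move/Ms_ss => ?; apply: in_or_app; right.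
have [P [proj [Hpow Hsurj]]] := exists_concrete_power A Heps Hfib Hpterm Hpfib H.
have [Tt [HTt Tt_sim]] := tau_sim H phi P proj Hpow.
have [Ts [HTs Ts_sim]] := sigma_sim H phi P proj Hpow.
have TsK : forall x, Ts (Tt x) = x.
  apply: equal_f (power_hom_ext Hpow (hom_comp HTt HTs) (hom_id P) _) => h x.
  rewrite (simulates_comp tauE sigmaE Tt_sim Ts_sim (c := fun u => proj (h * phi u)%g x)
             (g := gone G)) ?Hst /= ?phi1 ?mulg1 // => e e' He He'.
  by rewrite gmul1 phiM ?mulgA //; [exact: in_l_s | exact: in_l_t].
have TtK := fin_power_left_inverse HA Hpow HTt HTs TsK.
move=> c; apply: functional_extensionality => g.
have [x Hx] := Hsurj (fun h => c (gmul g (psi h))).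
have psi1 : psi 1%g = gone G by rewrite -phi1 psiK //; left.
have -> : c g = proj 1%g (Tt (Ts x)) by rewrite TtK Hx psi1 gmul1r.
symmetry; apply: simulates_comp sigmaE tauE Ts_sim Tt_sim _ _ _ _ _ => e e' He He'.
rewrite Hx mul1g -phiM ?psiK -?gmulA //; [|exact: in_l_t | exact: in_l_s].
by right; apply: in_products; [exact: in_l_t | exact: in_l_s].
Qed.
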